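(* In the qubit system ($d=2$, $\mathcal H=\mathbb C^2$), for every $\alpha\in(1,2)$ and $\beta\in(-\infty,0)\cup(0,1)$ there exist a unitary $U_0$ on $\mathbb C^2$ and a pure input state $|\psi_0\rangle\in\mathbb C^2$ such that $$M_{\alpha,\beta}(U_0|\psi_0\rangle\langle\psi_0|U_0^\dagger)-M_{\alpha,\beta}(|\psi_0\rangle\langle\psi_0|)>\mathcal M_{\alpha,\beta}(U_0).$$
   Context: For a qubit, the pure stabilizer states are $|0\rangle,|1\rangle,|\pm\rangle=(|0\rangle\pm|1\rangle)/\sqrt2,|\pm i\rangle=(|0\rangle\pm i|1\rangle)/\sqrt2$ (up to global phase), and stabilizer states ($\mathcal S$) are their convex combinations. For $\alpha\in(0,1)\cup(1,\infty)$, $\beta\in(-\infty,0)\cup(0,\infty)$: $S_{\alpha,\beta}(\rho)=\frac{1}{(1-\alpha)\beta}[(\mathrm{Tr}\rho^\alpha)^\beta-1]$, $J_{\alpha,\beta}(\rho,\sigma)=S_{\alpha,\beta}(\tfrac{\rho+\sigma}{2})-\tfrac12S_{\alpha,\beta}(\rho)-\tfrac12S_{\alpha,\beta}(\sigma)$; for a pure state $M_{\alpha,\beta}(|\psi\rangle\langle\psi|)=\min_{|\phi\rangle}J_{\alpha,\beta}(|\psi\rangle\langle\psi|,|\phi\rangle\langle\phi|)$ over pure stabilizer states $|\phi\rangle$, and for general $\rho$, $M_{\alpha,\beta}(\rho)=\min\sum_jp_jM_{\alpha,\beta}(|\psi_j\rangle\langle\psi_j|)$ over pure-state decompositions of $\rho$.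 The magic generating power of a unitary $U$ is $\mathcal M_{\alpha,\beta}(U)=\max_{\rho\in\mathcal S}M_{\alpha,\beta}(U\rho U^\dagger)$. *)

From mathcomp Require Import all_boot all_order all_algebra.
From mathcomp Require Import complex.
From mathcomp Require Import all_classical all_reals exp.
Set Implicit Arguments. Unset Strict Implicit. Unset Printing Implicit Defensive.
Import Order.TTheory GRing.Theory Num.Theory.
Local Open Scope ring_scope.
Local Open Scope classical_set_scope.
Local Open Scope complex_scope.

Section Qubit.
Variable R : realType.
Local Notation C := (R[i]).

Definition adj m n (A : 'M[C]_(m, n)) : 'M[C]_(n, m) := map_mx Num.conj A^T.

Definition unitary (U : 'M[C]_2) : Prop := U *m adj U = 1%:M.

Definition unit_vec (v : 'cV[C]_2) : Prop := adj v *m v = 1%:M.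

Definition proj (v : 'cV[C]_2) : 'M[C]_2 := v *m adj v.

Definition ket (a b : C) : 'cV[C]_2 :=
  \col_(i < 2) (if nat_of_ord i == 0%N then a else b).

Definition s2 : C := ((Num.sqrt (2 : R))^-1)%:C.

(* the six pure single-qubit stabilizer states |0>,|1>,|+>,|->,|+i>,|-i> *)
Definition stab_kets : seq 'cV[C]_2 :=
  [:: ket 1 0; ket 0 1; ket s2 s2; ket s2 (- s2);
      ket s2 (s2 * 'i); ket s2 (- (s2 * 'i))].

Definition stab_ket (k : 'I_6) : 'cV[C]_2 := nth 0 stab_kets k.

(* Spectrum of a 2x2 Hermitian matrix A: the two roots of its characteristic
   polynomial X^2 - tr(A) X + det(A) (real for Hermitian A). *)
Definition eig_disc (A : 'M[C]_2) : R :=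
  (complex.Re (\tr A)) ^+ 2 - 4 * complex.Re (\det A).
Definition eig_plus (A : 'M[C]_2) : R := (complex.Re (\tr A) + Num.sqrt (eig_disc A)) / 2.
Definition eig_minus (A : 'M[C]_2) : R := (complex.Re (\tr A) - Num.sqrt (eig_disc A)) / 2.

(* Tr rho^alpha = sum of lambda^alpha over the eigenvalues of rho *)
Definition trpow (alpha : R) (rho : 'M[C]_2) : R :=
  eig_plus rho `^ alpha + eig_minus rho `^ alpha.

Definition Sab (alpha beta : R) (rho : 'M[C]_2) : R :=
  ((trpow alpha rho) `^ beta - 1) / ((1 - alpha) * beta).

Definition Jab (alpha beta : R) (rho sigma : 'M[C]_2) : R :=
  Sab alpha beta ((2 : C)^-1 *: (rho + sigma))
  - Sab alpha beta rho / 2 - Sab alpha beta sigma / 2.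

Definition Mpure (alpha beta : R) (psi : 'cV[C]_2) : R :=
  \big[Num.min/Jab alpha beta (proj psi) (proj (stab_ket ord0))]_(k < 6)
     Jab alpha beta (proj psi) (proj (stab_ket k)).

Definition is_decomp (rho : 'M[C]_2) (n : nat) (p : 'I_n -> R)
    (psi : 'I_n -> 'cV[C]_2) : Prop :=
  (forall j, 0 <= p j) /\ \sum_(j < n) p j = 1 /\
  (forall j, unit_vec (psi j)) /\
  rho = \sum_(j < n) (p j)%:C *: proj (psi j).

Definition Mmix (alpha beta : R) (rho : 'M[C]_2) : R :=
  inf [set x : R | exists n (p : 'I_n -> R) (psi : 'I_n -> 'cV[C]_2),
         is_decomp rho p psi /\ x = \sum_(j < n) p j * Mpure alpha beta (psi j)].

Definition is_stab (rho : 'M[C]_2) : Prop :=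
  exists q : 'I_6 -> R, (forall k, 0 <= q k) /\ \sum_(k < 6) q k = 1 /\
    rho = \sum_(k < 6) (q k)%:C *: proj (stab_ket k).

Definition MGP (alpha beta : R) (U : 'M[C]_2) : R :=
  sup [set x : R | exists rho, is_stab rho /\
         x = Mmix alpha beta (U *m rho *m adj U)].

End Qubit.

From Pilot Require Import Defs.
From mathcomp Require Import all_boot all_order all_algebra.
From mathcomp Require Import complex.
From mathcomp Require Import all_classical all_reals exp.
From mathcomp Require Import ring lra.
Import Order.TTheory GRing.Theory Num.Theory.
Local Open Scope ring_scope.
Set Implicit Arguments. Unset Strict Implicit.

(* For unit vectors u, v with |<u|v>| = c, the state (|u><u| + |v><v|) / 2 has
   eigenvalues (1 +- c) / 2 and pure states have zero entropy, so
   J(u, v) = F (G c) with G c = ((1 + c) / 2) ^ alpha + ((1 - c) / 2) ^ alpha and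
   F decreasing: the magic of a pure state is governed by its largest overlap
   with a stabilizer state.  Let U be the real rotation by a small angle t and
   psi0 = U|0>.  Every U|s>, s a stabilizer state, keeps overlap cos t with s
   (overlap 1 for |+-i>, the eigenvectors of U), so by convexity of the roof
   MGP(U) <= B := F (G (cos t)), and M(psi0) <= B as well.  But U psi0 is at
   angle 2t from |0> and far from the other stabilizer states; since
   1 - G (cos 2t) is about alpha sin^2 t while 1 - G (cos t) is about
   alpha sin^2 t / 4, M(U psi0) > 2 B as soon as x = sin^2 t is small enough
   that x ^ alpha is negligible against x. *)

Section PowerInequalities.
Variable R : realType.

Lemma ln_ge1BV (y : R) : 0 < y -> 1 - y^-1 <= ln y.
Proof.
move=> y0; have : -1 < y^-1 - 1 by rewrite ltrBrDr addNr invr_gt0.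
by move/le_ln1Dx; rewrite addrC subrK lnV ?posrE // lerNl opprB.
Qed.

Lemma powR_ge1BV (g b : R) : 0 < g -> 0 <= b -> 1 + b * (1 - g^-1) <= g `^ b.
Proof.
move=> g0 b0; apply: le_trans (_ : 1 + b * ln g <= _).
  by rewrite lerD2l ler_wpM2l // ln_ge1BV.
by rewrite /powR gt_eqF // expR_ge1Dx.
Qed.

Lemma powR_ge_bernoulli (y r : R) : 0 <= y -> 1 <= r -> 1 + r * (y - 1) <= y `^ r.
Proof.
rewrite le_eqVlt => /predU1P[<- r1|y0 r1].
  by rewrite powR0 ?gt_eqF ?(lt_le_trans ltr01) //; lra.
have r0 : 0 < r by apply: lt_le_trans r1.
rewrite -(mulr_powRB1 (ltW y0) r0).
have r1' : 0 <= r - 1 by rewrite subr_ge0.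
apply: le_trans (ler_wpM2l (ltW y0) (powR_ge1BV y0 r1')).
have -> : y * (1 + (r - 1) * (1 - y^-1)) = 1 + r * (y - 1) by field; rewrite gt_eqF.
exact: lexx.
Qed.

Lemma powR_le_bernoulli (y s : R) : 0 <= y -> 0 < s -> s <= 1 -> y `^ s <= 1 + s * (y - 1).
Proof.
move=> y0 s0 s1.
have s1' : 1 <= s^-1 by rewrite invf_ge1.
have := powR_ge_bernoulli (powR_ge0 y s) s1'.
rewrite -powRrM mulfV ?gt_eqF // powRr1 // => h.
have := ler_wpM2l (ltW s0) h; rewrite mulrDr mulrA mulfV ?gt_eqF //; lra.
Qed.

Lemma ler_powR_pos (b u v : R) : 0 <= b -> 0 <= u -> u <= v -> u `^ b <= v `^ b.
Proof.
move=> b0 u0 uv; have v0 : 0 <= v by apply: le_trans uv.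
by apply: (ge0_ler_powR b0 _ _ uv); rewrite nnegrE.
Qed.

Lemma ltr_powR_neg (b u v : R) : b < 0 -> 0 < u -> u < v -> v `^ b < u `^ b.
Proof.
move=> b0 u0 uv; have v0 : 0 < v by apply: lt_trans uv.
have powRNN x : x `^ b = (x `^ (- b))^-1 by rewrite -powRN opprK.
rewrite !powRNN ltf_pV2 ?posrE ?powR_gt0 //.
by apply: (gt0_ltr_powR _); rewrite ?oppr_gt0 ?nnegrE ?ltW.
Qed.

Lemma ler_powR_neg (b u v : R) : b < 0 -> 0 < u -> u <= v -> v `^ b <= u `^ b.
Proof.
by move=> b0 u0; rewrite le_eqVlt => /predU1P[-> //|uv]; rewrite ltW ?ltr_powR_neg.
Qed.

End PowerInequalities.

Section EntropyOfTrace.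
Variables (R : realType) (alpha beta : R).
Hypothesis alpha_gt1 : 1 < alpha.

Definition Sab_tr (t : R) : R := (t `^ beta - 1) / ((1 - alpha) * beta).

(* [Tr rho ^ alpha] for a qubit state [rho] with Bloch vector of length [c],
   i.e. with eigenvalues [(1 + c) / 2] and [(1 - c) / 2]. *)
Definition trpow_bloch (c : R) : R := ((1 + c) / 2) `^ alpha + ((1 - c) / 2) `^ alpha.

Lemma SabE rho : Sab alpha beta rho = Sab_tr (trpow alpha rho).
Proof. by []. Qed.

Lemma Sab_tr1 : Sab_tr 1 = 0.
Proof. by rewrite /Sab_tr powR1 subrr mul0r. Qed.

Lemma Sab_tr_antitone g h : beta != 0 -> 0 < g -> g <= h -> Sab_tr h <= Sab_tr g.
Proof.
move=> b0 g0 gh; have h0 : 0 < h by apply: lt_le_trans gh.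
rewrite /Sab_tr; case: (ltgtP beta 0) b0 => // bs _.
  rewrite ler_pM2r ?invr_gt0 ?nmulr_lgt0 ?subr_lt0 // lerD2r.
  exact: ler_powR_neg.
rewrite ler_nM2r ?invr_lt0 ?nmulr_rlt0 ?subr_lt0 // lerD2r.
exact: ler_powR_pos (ltW bs) (ltW g0) gh.
Qed.

Lemma Sab_tr_ge0 g : beta != 0 -> 0 < g -> g <= 1 -> 0 <= Sab_tr g.
Proof. by move=> b0 g0 g1; rewrite -Sab_tr1 Sab_tr_antitone. Qed.

(* For [beta < 0] the hypothesis gives [g < g1 ^+ 2]; for [0 < beta < 1] the
   bounds [g ^ beta <= 1 + beta (g - 1)] and [g1 ^ beta >= 1 + beta (1 - g1^-1)]
   reduce the claim to it. *)
Lemma Sab_tr_gt_double g g1 : beta < 1 -> beta != 0 ->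
  0 < g -> 0 < g1 -> g1 <= 1 -> 2 * (1 - g1) < g1 * (1 - g) ->
  2 * Sab_tr g1 < Sab_tr g.
Proof.
move=> b1 b0 g0 g10 g11 key; rewrite /Sab_tr mulrA.
case: (ltgtP beta 0) b0 => // bs _.
  rewrite ltr_pM2r ?invr_gt0 ?nmulr_lgt0 ?subr_lt0 //.
  have gg1 : g < g1 * g1.
    rewrite -(ltr_pM2l g10); have := mulr_ge0 (sqr_ge0 (g1 - 1)) (ltW g10).
    have := sqr_ge0 (g1 - 1); nra.
  have := ltr_powR_neg bs g0 gg1; rewrite powRM ?ltW //.
  have := sqr_ge0 (g1 `^ beta - 1); nra.
rewrite ltr_nM2r ?invr_lt0 ?nmulr_rlt0 ?subr_lt0 //.
have hg := powR_le_bernoulli (ltW g0) bs (ltW b1).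
have := ler_wpM2l (ltW g10) (powR_ge1BV g10 (ltW bs)).
have -> : g1 * (1 + beta * (1 - g1^-1)) = g1 + beta * (g1 - 1).
  by field; rewrite gt_eqF.
have : g1 * (2 * (1 - g1)) * beta < g1 * (g1 * (1 - g)) * beta.
  by rewrite ltr_pM2r // ltr_pM2l.
nra.
Qed.

Lemma trpow_bloch1 : trpow_bloch 1 = 1.
Proof.
have a0 : alpha != 0 by rewrite gt_eqF // (lt_trans ltr01).
rewrite /trpow_bloch subrr mul0r powR0 // addr0.
have -> : (1 + 1) / 2 = 1 :> R by field.
by rewrite powR1.
Qed.

Lemma trpow_bloch_gt0 c : -1 < c -> 0 < trpow_bloch c.
Proof.
move=> c1; apply: (lt_le_trans (powR_gt0 alpha (_ : 0 < (1 + c) / 2))); first lra.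
by rewrite lerDl powR_ge0.
Qed.

Lemma trpow_bloch_ge c : -1 <= c -> 1 - alpha * ((1 - c) / 2) <= trpow_bloch c.
Proof.
move=> c1; have p0 : 0 <= (1 + c) / 2 by lra.
have := powR_ge_bernoulli p0 (ltW alpha_gt1).
have := powR_ge0 ((1 - c) / 2) alpha; rewrite /trpow_bloch; lra.
Qed.

Hypothesis alpha_le2 : alpha <= 2.

Lemma trpow_bloch_le c : 0 <= c <= 1 -> trpow_bloch c <= 1 - (alpha - 1) * ((1 - c) / 2).
Proof.
case/andP=> c0 c1; rewrite /trpow_bloch.
set p := (1 + c) / 2; set q := (1 - c) / 2.
have [p0 q0 qp] : [/\ 0 <= p, 0 <= q & q <= p] by rewrite /p /q; split; lra.
have a0 : 0 < alpha by apply: lt_trans alpha_gt1.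
have s0 : 0 < alpha - 1 by rewrite subr_gt0.
rewrite -(mulr_powRB1 p0 a0) -(mulr_powRB1 q0 a0).
have hq : q `^ (alpha - 1) <= p `^ (alpha - 1) := ler_powR_pos (ltW s0) q0 qp.
have hp : p `^ (alpha - 1) <= 1 + (alpha - 1) * (p - 1).
  by apply: powR_le_bernoulli => //; have := alpha_le2; lra.
have := ler_wpM2l q0 hq; have := ler_wpM2l p0 hp.
rewrite /p /q; nra.
Qed.

End EntropyOfTrace.

Local Open Scope complex_scope.

Lemma mxtrace2 (T : comRingType) (A : 'M[T]_2) : \tr A = A 0 0 + A 1 1.
Proof. by rewrite /mxtrace !big_ord_recl big_ord0 addr0; do 2 f_equal; apply: val_inj. Qed.

Lemma det_mx2 (T : comRingType) (A : 'M[T]_2) : \det A = A 0 0 * A 1 1 - A 0 1 * A 1 0.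
Proof.
rewrite (expand_det_row _ 0) !big_ord_recl big_ord0 /cofactor !det_mx11 !mxE /=.
rewrite addr0 expr0 expr1 !mul1r mulN1r mulrN.
by congr (_ * _ - _ * _); congr (A _ _); apply: val_inj.
Qed.

Section PureQubits.
Variable R : realType.
Local Notation C := R[i].

Definition normc2 (z : C) : R := complex.Re z ^+ 2 + complex.Im z ^+ 2.

Definition overlap2 (u v : 'cV[C]_2) : R := normc2 ((adj u *m v) 0 0).

Lemma ketE (v : 'cV[C]_2) : ket (v 0 0) (v 1 0) = v.
Proof.
apply/matrixP => i j; rewrite !ord1 !mxE.
by case: i => [[|[|//]] ?]; congr (v _ _); apply: val_inj.
Qed.

Lemma overlap2_ket a1 a2 b1 b2 :
  overlap2 (ket a1 a2) (ket b1 b2) = normc2 (Num.conj a1 * b1 + Num.conj a2 * b2).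
Proof. by rewrite /overlap2 !mxE big_ord_recl big_ord1 !mxE. Qed.

Lemma unit_vec_ket a1 a2 : unit_vec (ket a1 a2) <-> normc2 a1 + normc2 a2 = 1.
Proof.
rewrite /unit_vec -matrixP; case: a1 a2 => [x1 y1] [x2 y2]; rewrite /normc2 /=.
split=> [/(_ 0 0)|n1 i j]; rewrite ?ord1 !mxE big_ord_recl big_ord1 !mxE /=.
  by case=> <- _; ring.
by apply/eqP; rewrite eq_complex /= -n1; apply/andP; split; apply/eqP; ring.
Qed.

Lemma trpow_bloch_spectrum alpha (A : 'M[C]_2) c : 0 <= c ->
  complex.Re (\tr A) = 1 -> complex.Re (\det A) = (1 - c ^+ 2) / 4 ->
  trpow alpha A = trpow_bloch alpha c.
Proof.
move=> c0 trA detA; rewrite /trpow /eig_plus /eig_minus /eig_disc trA detA.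
have -> : 1 ^+ 2 - 4 * ((1 - c ^+ 2) / 4) = c ^+ 2 by field.
by rewrite sqrtr_sqr ger0_norm.
Qed.

Lemma proj_ket_tr_det a1 a2 :
  complex.Re (\tr (Defs.proj (ket a1 a2))) = normc2 a1 + normc2 a2 /\
  complex.Re (\det (Defs.proj (ket a1 a2))) = 0.
Proof.
case: a1 a2 => [x1 y1] [x2 y2].
by rewrite mxtrace2 det_mx2 !mxE !big_ord1 !mxE /normc2 /=; split; ring.
Qed.

Lemma mix_ket_tr_det a1 a2 b1 b2
    (M := 2^-1 *: (Defs.proj (ket a1 a2) + Defs.proj (ket b1 b2))) :
  complex.Re (\tr M) = (normc2 a1 + normc2 a2 + (normc2 b1 + normc2 b2)) / 2 /\
  complex.Re (\det M) = ((normc2 a1 + normc2 a2) * (normc2 b1 + normc2 b2)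
                         - overlap2 (ket a1 a2) (ket b1 b2)) / 4.
Proof.
rewrite {}/M overlap2_ket; have -> : (2 : C)^-1 = (2^-1 : R)%:C.
  by rewrite -(rmorph_nat (real_complex R)) fmorphV.
case: a1 a2 b1 b2 => [x1 y1] [x2 y2] [z1 w1] [z2 w2].
rewrite mxtrace2 det_mx2 !mxE !big_ord1 !mxE /normc2 /=.
by split; field.
Qed.

Variables alpha beta : R.
Hypothesis alpha_gt1 : 1 < alpha.

Lemma Sab_proj u : unit_vec u -> Sab alpha beta (Defs.proj u) = 0.
Proof.
rewrite -(ketE u) => /unit_vec_ket n1; have [trP detP] := proj_ket_tr_det (u 0 0) (u 1 0).
rewrite SabE (trpow_bloch_spectrum _ ler01) ?trpow_bloch1 ?Sab_tr1 ?trP //.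
by rewrite detP expr1n subrr mul0r.
Qed.

Lemma Jab_proj u v c : unit_vec u -> unit_vec v -> overlap2 u v = c ^+ 2 -> 0 <= c ->
  Jab alpha beta (Defs.proj u) (Defs.proj v) = Sab_tr alpha beta (trpow_bloch alpha c).
Proof.
move=> nu nv o c0; rewrite /Jab !Sab_proj // !mul0r !subr0 SabE.
move: nu nv o; rewrite -(ketE u) -(ketE v) => /unit_vec_ket nu /unit_vec_ket nv o.
have [trM detM] := mix_ket_tr_det (u 0 0) (u 1 0) (v 0 0) (v 1 0).
rewrite (trpow_bloch_spectrum _ c0) //.
- by rewrite trM nu nv; field.
- by rewrite detM nu nv o mul1r.
Qed.

End PureQubits.

Section Magic.
Variables (R : realType) (alpha beta : R).
Local Notation C := R[i].

Lemma sqr_inv_sqrt2 : (Num.sqrt (2 : R))^-1 ^+ 2 = 2^-1.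
Proof. by rewrite exprVn sqr_sqrtr. Qed.

Lemma unit_vec_stab_ket k : unit_vec (stab_ket R k).
Proof.
case: k => [[|[|[|[|[|[|//]]]]]] ?]; apply/unit_vec_ket;
  rewrite /normc2 /s2 /=; move: sqr_inv_sqrt2;
  set r := (Num.sqrt (2 : R))^-1; lra.
Qed.

Lemma adj_mulmx m n p (A : 'M[C]_(m, n)) (B : 'M[C]_(n, p)) : adj (A *m B) = adj B *m adj A.
Proof. by rewrite /adj trmx_mul map_mxM. Qed.

Lemma unit_vec_mulmx (U : 'M[C]_2) (v : 'cV[C]_2) : unitary U -> unit_vec v -> unit_vec (U *m v).
Proof.
rewrite /unitary /unit_vec => /mulmx1C hU hv.
by rewrite adj_mulmx -mulmxA (mulmxA (adj U)) hU mul1mx.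
Qed.

Lemma Mpure_le_Jab (psi : 'cV[C]_2) k :
  Mpure alpha beta psi <= Jab alpha beta (Defs.proj psi) (Defs.proj (stab_ket R k)).
Proof. exact: bigmin_le. Qed.

Lemma le_Mpure (psi : 'cV[C]_2) m :
  (forall k, m <= Jab alpha beta (Defs.proj psi) (Defs.proj (stab_ket R k))) ->
  m <= Mpure alpha beta psi.
Proof. by move=> h; apply: le_bigmin. Qed.

(* Decomposing [U rho U^*] along the images of the pure stabilizer states bounds
   the convex roof; [0 <= m] covers the junk value of [inf] on an unbounded set. *)
Lemma MGP_le (U : 'M[C]_2) m : unitary U -> 0 <= m ->
  (forall k, Mpure alpha beta (U *m stab_ket R k) <= m) -> MGP alpha beta U <= m.
Proof.
move=> hU m0 hk; apply: ge_sup.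
  pose q (k : 'I_6) : R := (k == ord0)%:R.
  pose rho := \sum_(k < 6) (q k)%:C *: Defs.proj (stab_ket R k).
  exists (Mmix alpha beta (U *m rho *m adj U)), rho; split => //.
  exists q; split; first by move=> k; rewrite ler0n.
  by split => //; rewrite big_ord_recl big1 ?eqxx ?addr0.
move=> _ [_ [[q [q0 [q1 ->]]] ->]]; rewrite /Mmix.
set S := (X in inf X).
have Sq : S (\sum_(k < 6) q k * Mpure alpha beta (U *m stab_ket R k)).
  exists 6%N, q, (fun k => U *m stab_ket R k); split => //.
  do !split => //; first by move=> k; apply/unit_vec_mulmx/unit_vec_stab_ket.
  rewrite mulmx_sumr mulmx_suml; apply: eq_bigr => k _.
  by rewrite -scalemxAr -scalemxAl /Defs.proj adj_mulmx !mulmxA.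
have qm : \sum_(k < 6) q k * Mpure alpha beta (U *m stab_ket R k) <= m.
  rewrite -[m]mul1r -q1 mulr_suml; apply: ler_sum => k _.
  exact: ler_wpM2l.
case: (pselect (has_lbound S)) => [lbS|nlbS]; first exact: le_trans (ge_inf lbS Sq) qm.
by rewrite inf_out // => -[].
Qed.

End Magic.

Section Rotation.
Variable R : realType.
Local Notation C := R[i].

Definition rotmx (a b : R) : 'M[C]_2 :=
  \matrix_(i < 2, j < 2)
    (if i == 0 :> nat then if j == 0 :> nat then a else - b
     else if j == 0 :> nat then b else a)%:C.

Lemma rotmx_ket a b u v : rotmx a b *m ket u v = ket (a%:C * u - b%:C * v) (b%:C * u + a%:C * v).
Proof.
apply/matrixP => i j; rewrite !mxE big_ord_recl big_ord1 !mxE /=.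
by case: i => [[|[|//]] ?] /=; rewrite ?rmorphN ?mulNr.
Qed.

Lemma rotmx_mul a b : rotmx a b *m rotmx a b = rotmx (a ^+ 2 - b ^+ 2) (2 * a * b).
Proof.
apply/matrixP => i j; rewrite !mxE big_ord_recl big_ord1 !mxE /=.
case: i j => [[|[|//]] ?] [[|[|//]] ?] /=; apply/eqP; rewrite eq_complex /=;
  by apply/andP; split; apply/eqP; ring.
Qed.

Lemma rotmx_unitary a b : a ^+ 2 + b ^+ 2 = 1 -> unitary (rotmx a b).
Proof.
move=> ab1; apply/matrixP => i j; rewrite !mxE big_ord_recl big_ord1 !mxE /=.
case: i j => [[|[|//]] ?] [[|[|//]] ?] /=; apply/eqP; rewrite eq_complex /= -?ab1;
  by apply/andP; split; apply/eqP; ring.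
Qed.

End Rotation.

Section RotationMagic.
Variable R : realType.

Lemma overlap2_rotmx_stab (a b : R) (k : 'I_6) : a ^+ 2 + b ^+ 2 = 1 ->
  overlap2 (rotmx a b *m stab_ket R k) (stab_ket R k) = (if (k < 4)%N then a else 1) ^+ 2.
Proof.
move=> ab1; have r2 : 2 * (Num.sqrt (2 : R))^-1 ^+ 2 = 1 by rewrite sqr_inv_sqrt2; field.
case: k => [[|[|[|[|[|[|//]]]]]] ?]; rewrite /stab_ket /s2 /= rotmx_ket overlap2_ket /normc2 /=;
  set r := (Num.sqrt 2)^-1 in r2 *.
- by ring.
- by ring.
- by transitivity ((2 * r ^+ 2) ^+ 2 * a ^+ 2); [ring | rewrite r2 expr1n mul1r].
- by transitivity ((2 * r ^+ 2) ^+ 2 * a ^+ 2); [ring | rewrite r2 expr1n mul1r].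
- by transitivity ((2 * r ^+ 2) ^+ 2 * (a ^+ 2 + b ^+ 2)); [ring | rewrite r2 ab1 mulr1].
- by transitivity ((2 * r ^+ 2) ^+ 2 * (a ^+ 2 + b ^+ 2)); [ring | rewrite r2 ab1 mulr1].
Qed.

Lemma overlap2_rotmx_ket0 (p q : R) (k : 'I_6) : p ^+ 2 + q ^+ 2 = 1 ->
  overlap2 (rotmx p q *m stab_ket R 0) (stab_ket R k) =
  nth 0 [:: p ^+ 2; q ^+ 2; (p + q) ^+ 2 / 2; (p - q) ^+ 2 / 2; 2^-1; 2^-1] k.
Proof.
move=> pq1; have r2 : 2 * (Num.sqrt (2 : R))^-1 ^+ 2 = 1 by rewrite sqr_inv_sqrt2; field.
case: k => [[|[|[|[|[|[|//]]]]]] ?]; rewrite /stab_ket /s2 /= rotmx_ket overlap2_ket /normc2 /=;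
  set r := (Num.sqrt 2)^-1 in r2 *.
- by ring.
- by ring.
- by transitivity (2 * r ^+ 2 * ((p + q) ^+ 2 / 2)); [field | rewrite r2 mul1r].
- by transitivity (2 * r ^+ 2 * ((p - q) ^+ 2 / 2)); [field | rewrite r2 mul1r].
- by transitivity (2 * r ^+ 2 * ((p ^+ 2 + q ^+ 2) / 2)); [field | rewrite r2 pq1 !mul1r].
- by transitivity (2 * r ^+ 2 * ((p ^+ 2 + q ^+ 2) / 2)); [field | rewrite r2 pq1 !mul1r].
Qed.

Lemma overlap2_ge0 (u v : 'cV[R[i]]_2) : 0 <= overlap2 u v.
Proof. by rewrite /overlap2 /normc2 addr_ge0 ?sqr_ge0. Qed.

Variables alpha beta : R.
Hypotheses (alpha_gt1 : 1 < alpha) (alpha_le2 : alpha <= 2) (beta_neq0 : beta != 0).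

Lemma Sab_tr_trpow_bloch_ge0 c : 0 <= c <= 1 -> 0 <= Sab_tr alpha beta (trpow_bloch alpha c).
Proof.
case/andP=> c0 c1; apply: Sab_tr_ge0 => //; first by apply: trpow_bloch_gt0; lra.
apply: le_trans (trpow_bloch_le alpha_gt1 alpha_le2 _) _; first by rewrite c0.
suff : 0 <= (alpha - 1) * ((1 - c) / 2) by lra.
by apply: mulr_ge0; [rewrite subr_ge0 ltW | lra].
Qed.

Lemma Mpure_rotmx_stab_le a b k : a ^+ 2 + b ^+ 2 = 1 -> 0 <= a ->
  Mpure alpha beta (rotmx a b *m stab_ket R k) <= Sab_tr alpha beta (trpow_bloch alpha a).
Proof.
move=> ab1 a0; have a1 : a <= 1 by nra.
have u := unit_vec_mulmx (rotmx_unitary ab1) (unit_vec_stab_ket R k).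
apply: le_trans (Mpure_le_Jab _ _ _ k) _.
have := overlap2_rotmx_stab k ab1; case: ifP => _ o.
  by rewrite (Jab_proj beta alpha_gt1 u (unit_vec_stab_ket R k) o a0).
rewrite (Jab_proj beta alpha_gt1 u (unit_vec_stab_ket R k) o ler01).
by rewrite trpow_bloch1 // Sab_tr1 Sab_tr_trpow_bloch_ge0 ?a0.
Qed.

Lemma le_Jab_far (u v : 'cV[R[i]]_2) g : unit_vec u -> unit_vec v ->
  overlap2 u v <= (24 / 25) ^+ 2 -> 1 - (alpha - 1) / 50 <= g ->
  Sab_tr alpha beta g <= Jab alpha beta (Defs.proj u) (Defs.proj v).
Proof.
move=> nu nv o far; set c := Num.sqrt (overlap2 u v).
have c0 : 0 <= c := sqrtr_ge0 _.
have c1 : c <= 24 / 25.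
  have : c ^+ 2 <= (24 / 25) ^+ 2 by rewrite sqr_sqrtr ?overlap2_ge0.
  nra.
rewrite (Jab_proj beta alpha_gt1 nu nv (c := c)) ?sqr_sqrtr ?overlap2_ge0 //.
apply: Sab_tr_antitone; rewrite // ?trpow_bloch_gt0 //; first lra.
apply: le_trans (trpow_bloch_le alpha_gt1 alpha_le2 _) _; first by rewrite c0 /=; lra.
apply: le_trans far; have : 0 <= alpha - 1 by rewrite subr_ge0 ltW.
nra.
Qed.

Lemma le_Mpure_rotmx_ket0 p q g : p ^+ 2 + q ^+ 2 = 1 -> 0 <= p -> 0 <= q <= 1 / 5 ->
  trpow_bloch alpha p <= g -> 1 - (alpha - 1) / 50 <= g ->
  Sab_tr alpha beta g <= Mpure alpha beta (rotmx p q *m stab_ket R 0).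
Proof.
move=> pq1 p0 /andP[q0 q1] Gp far; have p1 : p <= 1 by nra.
have u := unit_vec_mulmx (rotmx_unitary pq1) (unit_vec_stab_ket R 0).
apply: le_Mpure => k; have o := overlap2_rotmx_ket0 k pq1.
case: k o => [[|[|[|[|[|[|//]]]]]] ?] /= o.
  rewrite (Jab_proj beta alpha_gt1 u (unit_vec_stab_ket R _) o p0).
  by apply: Sab_tr_antitone; rewrite // trpow_bloch_gt0 //; lra.
all: by apply: le_Jab_far; rewrite ?o //; [exact: unit_vec_stab_ket | nra].
Qed.

Lemma rotmx_magic_gap a b g : a ^+ 2 + b ^+ 2 = 1 -> 0 <= a -> 0 <= a ^+ 2 - b ^+ 2 ->
  0 <= 2 * a * b <= 1 / 5 ->
  trpow_bloch alpha (a ^+ 2 - b ^+ 2) <= g -> 1 - (alpha - 1) / 50 <= g ->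
  2 * Sab_tr alpha beta (trpow_bloch alpha a) < Sab_tr alpha beta g ->
  MGP alpha beta (rotmx a b) <
    Mpure alpha beta (rotmx a b *m (rotmx a b *m stab_ket R 0))
    - Mpure alpha beta (rotmx a b *m stab_ket R 0).
Proof.
move=> ab1 a0; have a1 : a <= 1 by nra.
move=> p0 q15 Gp far gap.
have B0 : 0 <= Sab_tr alpha beta (trpow_bloch alpha a).
  by apply: Sab_tr_trpow_bloch_ge0; rewrite a0.
have hU := MGP_le (rotmx_unitary ab1) B0 (fun k => Mpure_rotmx_stab_le k ab1 a0).
have hpsi := Mpure_rotmx_stab_le 0 ab1 a0.
have pq1 : (a ^+ 2 - b ^+ 2) ^+ 2 + (2 * a * b) ^+ 2 = 1.
  by transitivity ((a ^+ 2 + b ^+ 2) ^+ 2); [ring | rewrite ab1 expr1n].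
have hUpsi := le_Mpure_rotmx_ket0 pq1 p0 q15 Gp far.
rewrite mulmxA rotmx_mul ltrBrDl; apply: le_lt_trans (lerD hpsi hU) _.
by apply: lt_le_trans hUpsi; rewrite -mulr2n -mulr_natl.
Qed.

End RotationMagic.

Section Witness.
Variables (R : realType) (alpha : R).
Hypotheses (alpha_gt1 : 1 < alpha) (alpha_le2 : alpha <= 2).

(* [x ^ (alpha - 1) = (alpha - 1) / 100] makes the term [x ^ alpha] of
   [trpow_bloch alpha (1 - 2 x)] negligible against [alpha x]. *)
Definition rot_sin2 : R := ((alpha - 1) / 100) `^ (alpha - 1)^-1.

Definition trpow_rot2_bound : R :=
  (1 - rot_sin2) * (1 - (alpha - 1) * rot_sin2) + rot_sin2 * ((alpha - 1) / 100).

Lemma rot_sin2_gt0 : 0 < rot_sin2.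
Proof. by rewrite /rot_sin2 powR_gt0 // divr_gt0 // subr_gt0. Qed.

Lemma rot_sin2_le : rot_sin2 <= (alpha - 1) / 100.
Proof.
have a1 := alpha_gt1; have a2 := alpha_le2.
by rewrite /rot_sin2; apply: ge1r_powR; rewrite ?invf_ge1 ?divr_gt0 /=; lra.
Qed.

Lemma rot_sin2_powR : rot_sin2 `^ (alpha - 1) = (alpha - 1) / 100.
Proof.
have s0 : 0 < alpha - 1 by rewrite subr_gt0.
by rewrite /rot_sin2 -powRrM mulVf ?gt_eqF // powRr1 // divr_ge0 // ltW.
Qed.

Lemma trpow_bloch_rot2_le : trpow_bloch alpha (1 - 2 * rot_sin2) <= trpow_rot2_bound.
Proof.
have x0 := rot_sin2_gt0; have x1 := rot_sin2_le; have a2 := alpha_le2.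
have a0 : 0 < alpha by apply: lt_trans alpha_gt1.
have s0 : 0 < alpha - 1 by rewrite subr_gt0.
rewrite /trpow_bloch /trpow_rot2_bound.
rewrite (_ : (1 + (1 - 2 * rot_sin2)) / 2 = 1 - rot_sin2); last by field.
rewrite (_ : (1 - (1 - 2 * rot_sin2)) / 2 = rot_sin2); last by field.
rewrite -(mulr_powRB1 (_ : 0 <= 1 - rot_sin2) a0); last by lra.
rewrite -(mulr_powRB1 (ltW x0) a0) rot_sin2_powR lerD2r ler_wpM2l //; first lra.
apply: le_trans (powR_le_bernoulli _ s0 _) _; lra.
Qed.

Lemma trpow_rot2_bound_ge : 1 - (alpha - 1) / 50 <= trpow_rot2_bound.
Proof.
have x0 := rot_sin2_gt0; have x1 := rot_sin2_le; have a2 := alpha_le2.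
rewrite /trpow_rot2_bound; nra.
Qed.

Lemma trpow_rot2_bound_gt0 : 0 < trpow_rot2_bound.
Proof. by have a2 := alpha_le2; apply: lt_le_trans trpow_rot2_bound_ge; lra. Qed.

Lemma trpow_bloch_rot_gap (a := Num.sqrt (1 - rot_sin2)) :
  [/\ 0 < trpow_bloch alpha a, trpow_bloch alpha a <= 1 &
      2 * (1 - trpow_bloch alpha a) < trpow_bloch alpha a * (1 - trpow_rot2_bound)].
Proof.
have x0 := rot_sin2_gt0; have x1 := rot_sin2_le; have al1 := alpha_gt1; have al2 := alpha_le2.
have a2 : a ^+ 2 = 1 - rot_sin2 by rewrite sqr_sqrtr //; lra.
have a0 : 0 <= a := sqrtr_ge0 _.
have a1 : a <= 1 by nra.
have aq : 1 - a <= 51 / 100 * rot_sin2 by nra.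
have Glb : 1 - alpha * ((1 - a) / 2) <= trpow_bloch alpha a.
  by apply: trpow_bloch_ge; lra.
have Gub : trpow_bloch alpha a <= 1 - (alpha - 1) * ((1 - a) / 2).
  by apply: trpow_bloch_le; rewrite ?a0.
split; [by apply: trpow_bloch_gt0; lra | by apply: le_trans Gub _; nra |].
set G := trpow_bloch alpha a in Glb Gub *.
set x := rot_sin2 in x0 x1 aq *; set K := alpha - (alpha - 1) * x - (alpha - 1) / 100.
have -> : 1 - trpow_rot2_bound = x * K by rewrite /trpow_rot2_bound -/x /K; ring.
have ax : alpha * x <= 2 / 100 by nra.
have GL : 1 - 51 / 200 * (alpha * x) <= G by nra.
have KL : alpha - 2 / 100 <= K by rewrite /K; nra.
have : (1 - 51 / 200 * (alpha * x)) * (x * (alpha - 2 / 100)) <= G * (x * K).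
  by apply: ler_pM; nra.
have : 0 <= (2 / 100 - alpha * x) * (x * (alpha - 2 / 100)) by apply: mulr_ge0; nra.
nra.
Qed.

End Witness.

Theorem proposition5 (R : realType) (alpha beta : R) :
  1 < alpha -> alpha < 2 -> beta < 1 -> beta != 0 ->
  exists (U0 : 'M[R[i]]_2) (psi0 : 'cV[R[i]]_2),
    unitary U0 /\ unit_vec psi0 /\
    Mpure alpha beta (U0 *m psi0) - Mpure alpha beta psi0 > MGP alpha beta U0.
Proof.
move=> a1 /ltW a2 b1 b0.
have x0 := rot_sin2_gt0 a1; have := rot_sin2_le a1 a2.
set x := rot_sin2 alpha => x1; set a := Num.sqrt (1 - x); set b := Num.sqrt x.
have a2x : a ^+ 2 = 1 - x by rewrite sqr_sqrtr //; lra.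
have b2x : b ^+ 2 = x by rewrite sqr_sqrtr // ltW.
have ab1 : a ^+ 2 + b ^+ 2 = 1 by rewrite a2x b2x subrK.
have [a0 b0'] : 0 <= a /\ 0 <= b by split; apply: sqrtr_ge0.
exists (rotmx a b), (rotmx a b *m stab_ket R 0); split; first exact: rotmx_unitary.
split; first exact: unit_vec_mulmx (rotmx_unitary ab1) (unit_vec_stab_ket R 0).
have [G0 G1 key] := trpow_bloch_rot_gap a1 a2.
apply: (rotmx_magic_gap a1 a2 b0 (g := trpow_rot2_bound alpha)) => //.
- by rewrite a2x b2x; lra.
- by rewrite mulr_ge0 ?mulr_ge0 //=; nra.
- by rewrite a2x b2x (_ : 1 - x - x = 1 - 2 * x) ?trpow_bloch_rot2_le //; ring.
- exact: trpow_rot2_bound_ge.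
- exact: Sab_tr_gt_double b1 b0 (trpow_rot2_bound_gt0 a1 a2) G0 G1 key.
Qed.
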